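(* For every $I\subset\{1,\dots,g\}$, the element $\phi(\theta_I^2)\in\mathrm{Hom}(H,\mathfrak{p}(3))$ lies in $\mathrm{Der}_2\mathfrak{p}$.
   Context: $H$ is a $2g$-dimensional $\mathbb{Q}$-vector space with symplectic basis $a_1,b_1,\dots,a_g,b_g$ and symplectic form $\theta$, also viewed as $\theta=\sum_i a_i\wedge b_i$; $\theta_I=\sum_{i\in I}a_i\wedge b_i$. $\mathfrak{p}=\bigoplus_m\mathfrak{p}(m)$ is the graded Lie algebra $\mathbb{L}(H)/(\sum_i[a_i,b_i])$, $\mathbb{L}(H)$ the free Lie algebra on $H$ graded by bracket length. $\phi:\mathrm{Sym}^2\Lambda^2H\to\mathrm{Hom}(H,\mathfrak{p}(3))$ sends $(u_1\wedge v_1)(u_2\wedge v_2)$ to $x\mapsto \theta(u_1,x)[v_1,[u_2,v_2]]-\theta(v_1,x)[u_1,[u_2,v_2]]+\theta(u_2,x)[v_2,[u_1,v_1]]-\theta(v_2,x)[u_2,[u_1,v_1]]$. $\mathrm{Der}_n\mathfrak{p}\subset\mathrm{Hom}(\mathfrak{p}(1),\mathfrak{p}(n+1))$ is the space of homomorphisms that extend to a derivation of $\mathfrak{p}$ of degree $n$, i.e. the kernel of the map $\mathrm{Hom}(\mathfrak{p}(1),\mathfrak{p}(n+1))\to\mathfrak{p}(n+2)$ sending $\psi$ to $\sum_i([\psi(a_i),b_i]+[a_i,\psi(b_i)])$. *)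

From mathcomp Require Import all_boot all_order all_algebra.
Set Implicit Arguments. Unset Strict Implicit. Unset Printing Implicit Defensive.
Import Order.TTheory GRing.Theory Num.Theory.
Local Open Scope ring_scope.

(* The symplectic basis of H is indexed by 'I_g * bool:
   (i, false) is a_(i+1) and (i, true) is b_(i+1). *)
Definition letter (g : nat) := ('I_g * bool)%type.

(* The (completed) tensor algebra T(H) over Q: functions from words in the
   basis letters to rat; a word [:: c1; ...; cn] stands for c1 ⊗ ... ⊗ cn. *)
Definition tens (g : nat) := seq (letter g) -> rat.

Definition tadd g (u v : tens g) : tens g := fun w => u w + v w.
Definition tscale g (c : rat) (u : tens g) : tens g := fun w => c * u w.
Definition tmul g (u v : tens g) : tens g :=
  fun w => \sum_(k < (size w).+1) u (take k w) * v (drop k w).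
Definition tbr g (u v : tens g) : tens g :=
  tadd (tmul u v) (tscale (-1) (tmul v u)).
Definition tlet g (c : letter g) : tens g :=
  fun w => if w == [:: c] then 1 else 0.

Definition a_ g (i : 'I_g) : letter g := (i, false).
Definition b_ g (i : 'I_g) : letter g := (i, true).

Definition omega g : tens g :=
  fun w => \sum_(i < g) tbr (tlet (a_ i)) (tlet (b_ i)) w.

(* The free Lie algebra L(H), realised as the Lie subalgebra of T(H)
   generated by H (standard model of the free Lie algebra). *)
Inductive lie_elt g : tens g -> Prop :=
  | lie_gen (c : letter g) : lie_elt (tlet c)
  | lie_add u v : lie_elt u -> lie_elt v -> lie_elt (tadd u v)
  | lie_scale (c : rat) u : lie_elt u -> lie_elt (tscale c u)
  | lie_br u v : lie_elt u -> lie_elt v -> lie_elt (tbr u v).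

(* The Lie ideal of L(H) generated by omega; p = L(H) / lie_ideal. *)
Inductive lie_ideal g : tens g -> Prop :=
  | id_gen : lie_ideal (@omega g)
  | id_add u v : lie_ideal u -> lie_ideal v -> lie_ideal (tadd u v)
  | id_scale (c : rat) u : lie_ideal u -> lie_ideal (tscale c u)
  | id_br u v : lie_elt u -> lie_ideal v -> lie_ideal (tbr u v).

Definition homog g (n : nat) (u : tens g) : Prop :=
  forall w, size w != n -> u w = 0.

Definition theta g (c d : letter g) : rat :=
  if c.1 == d.1 then
    (if ~~ c.2 && d.2 then 1 else if c.2 && ~~ d.2 then -1 else 0)
  else 0.

(* A linear map H -> p(3) given by its values on the basis (representatives
   in L(H) of degree 3).  psi lies in Der_2 p iff its values are Lie elements
   of degree 3 and sum_i ([psi a_i, b_i] + [a_i, psi b_i]) = 0 in p(4),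
   i.e. lies in the ideal generated by omega. *)
Definition in_Der2 g (psi : letter g -> tens g) : Prop :=
  (forall c, lie_elt (psi c) /\ homog 3 (psi c)) /\
  lie_ideal (fun w => \sum_(i < g)
      tadd (tbr (psi (a_ i)) (tlet (b_ i))) (tbr (tlet (a_ i)) (psi (b_ i))) w).

(* phi((u1 ∧ v1)(u2 ∧ v2)) evaluated at x, for basis vectors u1 v1 u2 v2 x *)
Definition phi_dec g (u1 v1 u2 v2 x : letter g) : tens g :=
  fun w =>
    theta u1 x * tbr (tlet v1) (tbr (tlet u2) (tlet v2)) w
  - theta v1 x * tbr (tlet u1) (tbr (tlet u2) (tlet v2)) w
  + theta u2 x * tbr (tlet v2) (tbr (tlet u1) (tlet v1)) w
  - theta v2 x * tbr (tlet u2) (tbr (tlet u1) (tlet v1)) w.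

(* theta_I^2 = sum_{i,j in I} (a_i ∧ b_i)(a_j ∧ b_j) in Sym^2 Λ^2 H, so by
   linearity phi(theta_I^2)(x) = sum_{i,j in I} phi((a_i∧b_i)(a_j∧b_j))(x). *)
Definition phi_thetaI2 g (I : {set 'I_g}) (x : letter g) : tens g :=
  fun w => \sum_(i in I) \sum_(j in I) phi_dec (a_ i) (b_ i) (a_ j) (b_ j) x w.

(* Write omega_I = sum_(i in I) [a_i, b_i].  Expanding phi, the value of
   phi(theta_I^2) at a basis vector x is 2 [x, omega_I] when x lies in
   H_I = span {a_i, b_i | i in I} and 0 otherwise; in particular it is a Lie
   element of degree 3.  By the Jacobi identity,
   [phi(theta_I^2)(a_i), b_i] + [a_i, phi(theta_I^2)(b_i)] = 2 [[a_i, b_i], omega_I]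
   for i in I, so the derivation condition sums to 2 [omega_I, omega_I], which
   is 0 already in the free Lie algebra, not just modulo the ideal (omega). *)

From HB Require Import structures.
From mathcomp Require Import all_boot all_order all_algebra.
From mathcomp Require Import boolp zify.
Set Implicit Arguments. Unset Strict Implicit. Unset Printing Implicit Defensive.
Import Order.TTheory GRing.Theory Num.Theory.
Local Open Scope ring_scope.

HB.instance Definition _ g := gen_eqMixin (tens g).
HB.instance Definition _ g := gen_choiceMixin (tens g).

Section TensorAlgebra.
Variable g : nat.
Implicit Types u v x : tens g.

Definition tzero : tens g := fun _ => 0.
Definition tunit : tens g := fun w => if w == [::] then 1 else 0.

Lemma taddA : associative (@tadd g).
Proof. by move=> u v x; apply: funext => w; rewrite /tadd addrA. Qed.

Lemma taddC : commutative (@tadd g).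
Proof. by move=> u v; apply: funext => w; rewrite /tadd addrC. Qed.

Lemma tadd0l : left_id tzero (@tadd g).
Proof. by move=> u; apply: funext => w; rewrite /tadd /tzero add0r. Qed.

Lemma taddNl : left_inverse tzero (tscale (-1)) (@tadd g).
Proof. by move=> u; apply: funext => w; rewrite /tadd /tscale /tzero mulN1r addNr. Qed.

HB.instance Definition _ := GRing.isZmodule.Build (tens g) taddA taddC tadd0l taddNl.

Lemma tscaleA a b u : tscale a (tscale b u) = tscale (a * b) u.
Proof. by apply: funext => w; rewrite /tscale mulrA. Qed.

Lemma tscale1 : left_id 1 (@tscale g).
Proof. by move=> u; apply: funext => w; rewrite /tscale mul1r. Qed.

Lemma tscaleDr : right_distributive (@tscale g) +%R.
Proof. by move=> a u v; apply: funext => w; rewrite /tscale /= /tadd mulrDr. Qed.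

Lemma tscaleDl u a b : tscale (a + b) u = tscale a u + tscale b u.
Proof. by apply: funext => w; rewrite /tscale /= /tadd mulrDl. Qed.

HB.instance Definition _ :=
  GRing.Zmodule_isLmodule.Build rat (tens g) tscaleA tscale1 tscaleDr tscaleDl.

Lemma tensD u v w : (u + v) w = u w + v w.
Proof. by []. Qed.

Lemma tensN u w : (- u) w = - u w.
Proof. exact: mulN1r. Qed.

Lemma tensZ (a : rat) u w : (a *: u) w = a * u w.
Proof. by []. Qed.

Lemma tmul_nil u v : tmul u v [::] = u [::] * v [::].
Proof. by rewrite /tmul big_ord1. Qed.

Lemma tmul_cons u v c w :
  tmul u v (c :: w) = u [::] * v (c :: w) + tmul (fun w' => u (c :: w')) v w.
Proof. by rewrite /tmul /= big_ord_recl. Qed.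

Lemma tmulDl : left_distributive (@tmul g) +%R.
Proof.
move=> u v x; apply: funext => w; rewrite tensD /tmul -big_split.
by apply: eq_bigr => k _; rewrite tensD mulrDl.
Qed.

Lemma tmulDr : right_distributive (@tmul g) +%R.
Proof.
move=> u v x; apply: funext => w; rewrite tensD /tmul -big_split.
by apply: eq_bigr => k _; rewrite tensD mulrDr.
Qed.

Lemma tmulZl (a : rat) u v : tmul (a *: u) v = a *: tmul u v.
Proof.
apply: funext => w; rewrite tensZ /tmul mulr_sumr.
by apply: eq_bigr => k _; rewrite tensZ mulrA.
Qed.

Lemma tmulZr (a : rat) u v : tmul u (a *: v) = a *: tmul u v.
Proof.
apply: funext => w; rewrite tensZ /tmul mulr_sumr.
by apply: eq_bigr => k _; rewrite tensZ mulrCA.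
Qed.

(* Induction on the word: peeling off its first letter moves it from [u] to [tmul u v]. *)
Lemma tmulA : associative (@tmul g).
Proof.
move=> u v x; apply: funext => w; elim: w u v => [|c w IH] u v.
  by rewrite !tmul_nil mulrA.
have tail_uv : (fun w' => tmul u v (c :: w')) =
    u [::] *: ((fun w' => v (c :: w')) : tens g) + tmul (fun w' => u (c :: w')) v.
  by apply: funext => w'; rewrite tmul_cons.
rewrite !tmul_cons tmul_nil tail_uv tmulDl tensD
  (tmulZl (u [::]) (fun w' => v (c :: w')) x) tensZ -IH.
by rewrite mulrDr addrA mulrA.
Qed.

Lemma tmul1l : left_id tunit (@tmul g).
Proof.
move=> u; apply: funext => -[|c w]; first by rewrite tmul_nil /tunit eqxx mul1r.
rewrite tmul_cons /tunit eqxx mul1r /tmul big1 ?addr0 // => k _.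
by rewrite mul0r.
Qed.

Lemma tmul1r : right_id tunit (@tmul g).
Proof.
move=> u; apply: funext => w; elim: w u => [|c w IH] u.
  by rewrite tmul_nil /tunit eqxx mulr1.
by rewrite tmul_cons IH /tunit mulr0 add0r.
Qed.

Lemma tunit_neq0 : tunit != 0.
Proof.
apply/eqP => /(congr1 (fun u : tens g => u [::])).
by rewrite /tunit eqxx => /eqP; rewrite oner_eq0.
Qed.

HB.instance Definition _ :=
  GRing.Zmodule_isNzRing.Build (tens g) tmulA tmul1l tmul1r tmulDl tmulDr tunit_neq0.

Lemma tscaleAl (a : rat) u v : a *: (u * v) = a *: u * v.
Proof. exact/esym/tmulZl. Qed.

HB.instance Definition _ := GRing.Lmodule_isLalgebra.Build rat (tens g) tscaleAl.

Lemma tscaleAr (a : rat) u v : a *: (u * v) = u * (a *: v).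
Proof. exact/esym/tmulZr. Qed.

HB.instance Definition _ := GRing.Lalgebra_isAlgebra.Build rat (tens g) tscaleAr.

End TensorAlgebra.

Lemma commutator_jacobi (A : pzRingType) (u v z : A) :
  (u * z - z * u) * v - v * (u * z - z * u) + (u * (v * z - z * v) - (v * z - z * v) * u)
  = (u * v - v * u) * z - z * (u * v - v * u).
Proof.
rewrite !mulrBl !mulrBr !mulrA !opprB addrACA -!addrA addrCA [u * z * v + _]addrCA.
rewrite [v * z * u + _]addrCA addrCA addNKr [v * z * u + _]addrCA subrr addr0.
by rewrite [- (z * u * v) + _]addrCA [- (z * u * v) + _]addrC.
Qed.

Section Brackets.
Variable g : nat.
Implicit Types u v z : tens g.

Lemma tbrE u v : tbr u v = u * v - v * u.
Proof. by []. Qed.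

Lemma sum_tensE (J : Type) (r : seq J) (P : pred J) (F : J -> tens g) w :
  (\sum_(j <- r | P j) F j) w = \sum_(j <- r | P j) F j w.
Proof. exact: (big_morph (fun u => u w) (fun u v => tensD u v w) (erefl (0 : rat))). Qed.

Lemma tbr_jacobi u v z : tbr (tbr u z) v + tbr u (tbr v z) = tbr (tbr u v) z.
Proof. exact: commutator_jacobi. Qed.

Lemma tbrxx u : tbr u u = 0.
Proof. exact: subrr. Qed.

Lemma tbr0l v : tbr 0 v = 0.
Proof. by rewrite tbrE mul0r mulr0 subrr. Qed.

Lemma tbr0r u : tbr u 0 = 0.
Proof. by rewrite tbrE mul0r mulr0 subrr. Qed.

Lemma tbrMnl u v n : tbr (u *+ n) v = tbr u v *+ n.
Proof. by rewrite !tbrE mulrnAl mulrnAr mulrnBl. Qed.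

Lemma tbrMnr u v n : tbr u (v *+ n) = tbr u v *+ n.
Proof. by rewrite !tbrE mulrnAl mulrnAr mulrnBl. Qed.

Lemma tbr_suml (J : Type) (r : seq J) (P : pred J) (F : J -> tens g) v :
  tbr (\sum_(j <- r | P j) F j) v = \sum_(j <- r | P j) tbr (F j) v.
Proof. by rewrite tbrE mulr_suml mulr_sumr -sumrB. Qed.

Lemma tbr_sumr (J : Type) (r : seq J) (P : pred J) (F : J -> tens g) u :
  tbr u (\sum_(j <- r | P j) F j) = \sum_(j <- r | P j) tbr u (F j).
Proof. by rewrite tbrE mulr_suml mulr_sumr -sumrB. Qed.

Lemma tbrBZl (a b : rat) u v z : tbr (a *: u - b *: v) z = a *: tbr u z - b *: tbr v z.
Proof.
rewrite !tbrE mulrBl mulrBr -!scalerAl -!scalerAr !scalerBr !opprB.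
by rewrite addrACA [RHS]addrACA [in RHS](addrC (- _)).
Qed.

End Brackets.

Section LieElements.
Variable g : nat.
Implicit Types u v : tens g.

Lemma lie_elt0 (c : letter g) : lie_elt (0 : tens g).
Proof. by rewrite -(scale0r (tlet c)); apply/lie_scale/lie_gen. Qed.

Lemma lie_elt_sum (c : letter g) (J : Type) (r : seq J) (P : pred J) (F : J -> tens g) :
  (forall j, P j -> lie_elt (F j)) -> lie_elt (\sum_(j <- r | P j) F j).
Proof. by move=> lieF; apply: big_ind => //; [exact: lie_elt0 c | exact: lie_add]. Qed.

Lemma lie_ideal0 : lie_ideal (0 : tens g).
Proof. by rewrite -(scale0r (@omega g)); apply/id_scale/id_gen. Qed.

Lemma homogD n u v : homog n u -> homog n v -> homog n (u + v).
Proof. by move=> hu hv w hw; rewrite tensD hu // hv // addr0. Qed.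

Lemma homog_sum n (J : Type) (r : seq J) (P : pred J) (F : J -> tens g) :
  (forall j, P j -> homog n (F j)) -> homog n (\sum_(j <- r | P j) F j).
Proof. by move=> homF; apply: big_ind => //; exact: homogD. Qed.

Lemma homog_tlet (c : letter g) : homog 1 (tlet c).
Proof. by move=> w hw; rewrite /tlet; case: eqP => // wc; rewrite wc in hw. Qed.

(* A word of length [m + n] only splits as (length [m], length [n]) at position [m]. *)
Lemma homogM m n u v : homog m u -> homog n v -> homog (m + n) (u * v).
Proof.
move=> hu hv w hw; rewrite /GRing.mul /= /tmul big1 // => k _.
have le_k : (k <= size w)%N by rewrite -ltnS ltn_ord.
have [size_k|] := eqVneq (size (take k w)) m; last by move/hu->; rewrite mul0r.
rewrite hv ?mulr0 // size_drop; rewrite size_take in size_k.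
by move: size_k hw; case: ltnP => hk <- /eqP hw; apply/eqP => e; apply: hw; lia.
Qed.

Lemma homog_tbr m n u v : homog m u -> homog n v -> homog (m + n) (tbr u v).
Proof.
move=> hu hv; rewrite tbrE; apply: homogD; first exact: homogM.
by move=> w hw; rewrite tensN (homogM hv hu) ?oppr0 // addnC.
Qed.

End LieElements.

Section PhiThetaI2.
Variable g : nat.
Implicit Types x u v : letter g.

Definition omega_at (i : 'I_g) : tens g := tbr (tlet (a_ i)) (tlet (b_ i)).

Definition omega_on (I : {set 'I_g}) : tens g := \sum_(i in I) omega_at i.

Definition wedge_contract x u v : tens g := theta u x *: tlet v - theta v x *: tlet u.

Lemma lie_elt_omega_on (c : letter g) (I : {set 'I_g}) : lie_elt (omega_on I).
Proof. by apply: (lie_elt_sum c) => i _; apply/lie_br/lie_gen/lie_gen. Qed.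

Lemma homog_omega_on (I : {set 'I_g}) : homog 2 (omega_on I).
Proof. by apply: homog_sum => i _; apply/(homog_tbr (m := 1))/homog_tlet/homog_tlet. Qed.

Lemma phi_decE u1 v1 u2 v2 x :
  phi_dec u1 v1 u2 v2 x =
  tbr (wedge_contract x u1 v1) (tbr (tlet u2) (tlet v2)) +
  tbr (wedge_contract x u2 v2) (tbr (tlet u1) (tlet v1)).
Proof. by apply: funext => w; rewrite !tbrBZl !tensD !tensN !tensZ addrA. Qed.

Lemma wedge_contract_ab (i : 'I_g) x :
  wedge_contract x (a_ i) (b_ i) = if i == x.1 then tlet x else 0.
Proof.
case: x => k [] /=; rewrite /wedge_contract /theta /=; case: eqP => [<-|_].
- by rewrite scale1r scale0r subr0.
- by rewrite !scale0r subr0.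
- by rewrite scale0r sub0r scaleN1r opprK.
- by rewrite !scale0r subr0.
Qed.

Lemma phi_thetaI2E (I : {set 'I_g}) x :
  phi_thetaI2 I x = (\sum_(i in I) tbr (wedge_contract x (a_ i) (b_ i)) (omega_on I)) *+ 2.
Proof.
have -> : phi_thetaI2 I x = \sum_(i in I) \sum_(j in I) phi_dec (a_ i) (b_ i) (a_ j) (b_ j) x.
  by apply: funext => w; rewrite sum_tensE; apply: eq_bigr => i _; rewrite sum_tensE.
under eq_bigr do under eq_bigr do rewrite phi_decE.
rewrite mulr2n; under eq_bigr do rewrite big_split /=.
rewrite big_split /= [X in _ + X]exchange_big /=.
by congr (_ + _); apply: eq_bigr => i _; rewrite tbr_sumr.
Qed.

Lemma phi_thetaI2_letter (I : {set 'I_g}) x :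
  phi_thetaI2 I x = (if x.1 \in I then tbr (tlet x) (omega_on I) else 0) *+ 2.
Proof.
rewrite phi_thetaI2E; congr (_ *+ 2).
under eq_bigr do rewrite wedge_contract_ab (fun_if (fun u : tens g => tbr u (omega_on I))) tbr0l.
rewrite -big_mkcondr; case: ifPn => xI.
  by apply: big_pred1 => i /=; apply/andb_idl => /eqP->.
by rewrite big_pred0 // => i /=; apply/andP => -[iI /eqP ix]; rewrite -ix iI in xI.
Qed.
Lemma phi_thetaI2_lie_homog (I : {set 'I_g}) x :
  lie_elt (phi_thetaI2 I x) /\ homog 3 (phi_thetaI2 I x).
Proof.
rewrite phi_thetaI2_letter mulr2n; case: ifP => _; last first.
  by rewrite addr0; split; [exact: lie_elt0 x | move=> w].
split; first by apply/lie_add; apply/lie_br/(lie_elt_omega_on x)/lie_gen.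
by apply/homogD; apply/(homog_tbr (m := 1))/homog_omega_on/homog_tlet.
Qed.

Lemma phi_thetaI2_derivation_term (I : {set 'I_g}) (k : 'I_g) :
  tbr (phi_thetaI2 I (a_ k)) (tlet (b_ k)) + tbr (tlet (a_ k)) (phi_thetaI2 I (b_ k)) =
  (if k \in I then tbr (omega_at k) (omega_on I) else 0) *+ 2.
Proof.
rewrite !phi_thetaI2_letter /=; case: ifP => _; last by rewrite mul0rn tbr0l tbr0r addr0.
by rewrite tbrMnl tbrMnr -mulrnDl tbr_jacobi.
Qed.

Lemma phi_thetaI2_derivation_sum (I : {set 'I_g}) :
  \sum_(k < g) (tbr (phi_thetaI2 I (a_ k)) (tlet (b_ k)) +
                tbr (tlet (a_ k)) (phi_thetaI2 I (b_ k))) = 0.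
Proof.
under eq_bigr do rewrite phi_thetaI2_derivation_term.
by rewrite sumrMnl -big_mkcond -tbr_suml tbrxx mul0rn.
Qed.

End PhiThetaI2.

Theorem mainTheorem5 (g : nat) (I : {set 'I_g}) : in_Der2 (phi_thetaI2 I).
Proof.
split=> [c|]; first exact: phi_thetaI2_lie_homog.
apply: (eq_ind _ (@lie_ideal g) (@lie_ideal0 g)).
rewrite -(phi_thetaI2_derivation_sum I); apply: funext => w; exact: sum_tensE.
Qed.
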